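(* Let $A$ be a two-dimensional evolution algebra over a field $\mathbb{K}$. (i) If $A^2=A$ and for every natural basis $\{e_1,e_2\}$ of $A$, writing $e_1^2=\omega_{11}e_1+\omega_{21}e_2$ and $e_2^2=\omega_{12}e_1+\omega_{22}e_2$, one has $\omega_{12}\neq0$ and $\omega_{21}\neq0$, then $A$ is simple. (ii) If $A$ is simple, then for every natural basis $\{e_1,e_2\}$ of $A$ (with the same notation) one has $\omega_{12}\neq0$ and $\omega_{21}\neq0$.
   Context: An evolution algebra over $\mathbb{K}$ is a $\mathbb{K}$-algebra $A$ with a basis $\{e_i\}$ (a natural basis) such that $e_ie_j=0$ for $i\neq j$. In the paper's language, $\omega_{12}\neq0$ and $\omega_{21}\neq0$ means that the top and bottom edges appear in the pseudo-square relative to that basis. $A$ is simple if $A^2\neq0$ and its only ideals are $0$ and $A$. *)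

From HB Require Import structures.
From mathcomp Require Import all_boot all_order all_algebra.
Set Implicit Arguments. Unset Strict Implicit. Unset Printing Implicit Defensive.
Import GRing.Theory.
Local Open Scope ring_scope.

Definition bilinear_mul (K : fieldType) (V : vectType K) (mul : V -> V -> V) :=
  (forall (a : K) (x y z : V), mul (a *: x + y) z = a *: mul x z + mul y z) /\
  (forall (a : K) (x y z : V), mul z (a *: x + y) = a *: mul z x + mul z y).

Definition natural_basis2 (K : fieldType) (V : vectType K) (mul : V -> V -> V)
    (e1 e2 : V) :=
  basis_of fullv [:: e1; e2] /\ mul e1 e2 = 0 /\ mul e2 e1 = 0.

Definition evolution_algebra2 (K : fieldType) (V : vectType K) (mul : V -> V -> V) :=
  bilinear_mul mul /\ exists e1 e2 : V, natural_basis2 mul e1 e2.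

Definition square_is_full (K : fieldType) (V : vectType K) (mul : V -> V -> V) :=
  forall z : V, exists s : seq (V * V), z = \sum_(p <- s) mul p.1 p.2.

Definition square_nonzero (K : fieldType) (V : vectType K) (mul : V -> V -> V) :=
  exists x y : V, mul x y != 0.

Definition is_ideal (K : fieldType) (V : vectType K) (mul : V -> V -> V)
    (I : {vspace V}) :=
  forall x y : V, x \in I -> mul x y \in I /\ mul y x \in I.

Definition simple_algebra (K : fieldType) (V : vectType K) (mul : V -> V -> V) :=
  square_nonzero mul /\
  forall I : {vspace V}, is_ideal mul I -> I = 0%VS \/ I = fullv.

From HB Require Import structures.
From mathcomp Require Import all_boot all_order all_algebra.
Import GRing.Theory.
Local Open Scope ring_scope.
Set Implicit Arguments.
Unset Strict Implicit.

(* For a natural basis {e1, e2} every product is a combination of e1^2 and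
   e2^2: (a e1 + b e2)(c e1 + d e2) = ac e1^2 + bd e2^2.
   (i) A nonzero ideal I contains some a e1 + b e2 with, say, a <> 0; then
   (a e1 + b e2) e1 = a e1^2 puts e1^2 in I, and e1^2 e2 = w21 e2^2 puts e2^2
   in I.  Hence I contains A^2 = A.
   (ii) If w21 = 0 then e1^2 = w11 e1, so the line K e1 is a nonzero proper
   ideal; symmetrically for w12. *)

Section VectorSpace.
Variables (K : fieldType) (V : vectType K).

Lemma basis2_coord (e1 e2 : V) : basis_of fullv [:: e1; e2] ->
  forall v, exists a b : K, v = a *: e1 + b *: e2.
Proof.
move=> /andP[/eqP span_e _] v; have := memvf v.
rewrite -span_e span_cons span_seq1.
by case/memv_addP=> _ /vlineP[a ->] [_ /vlineP[b ->] ->]; exists a, b.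
Qed.

Lemma dim_basis2 (e1 e2 : V) : basis_of fullv [:: e1; e2] ->
  \dim (fullv : {vspace V}) = 2%N.
Proof. exact: (@size_basis _ _ _ _ (in_tuple [:: e1; e2])). Qed.

Lemma vline_neq_fullv (f : V) : (1 < \dim (fullv : {vspace V}))%N ->
  <[f]>%VS != fullv.
Proof.
move=> dim_gt1; apply: contraTneq dim_gt1 => <-.
by rewrite dim_vline; case: (f != 0).
Qed.

End VectorSpace.

Section Bilinear.
Variables (K : fieldType) (V : vectType K) (mul : V -> V -> V).
Hypothesis mul_bilinear : bilinear_mul mul.

Lemma bmulDl x y z : mul (x + y) z = mul x z + mul y z.
Proof. by have := mul_bilinear.1 1 x y z; rewrite !scale1r. Qed.

Lemma bmulDr x y z : mul z (x + y) = mul z x + mul z y.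
Proof. by have := mul_bilinear.2 1 x y z; rewrite !scale1r. Qed.

Lemma bmul0l z : mul 0 z = 0.
Proof. by apply: (addrI (mul 0 z)); rewrite -bmulDl !addr0. Qed.

Lemma bmul0r z : mul z 0 = 0.
Proof. by apply: (addrI (mul z 0)); rewrite -bmulDr !addr0. Qed.

Lemma bmulZl a x z : mul (a *: x) z = a *: mul x z.
Proof. by have := mul_bilinear.1 a x 0 z; rewrite !addr0 bmul0l addr0. Qed.

Lemma bmulZr a x z : mul z (a *: x) = a *: mul z x.
Proof. by have := mul_bilinear.2 a x 0 z; rewrite !addr0 bmul0r addr0. Qed.

Lemma square_nonzero_of_full : square_is_full mul -> (fullv : {vspace V}) != 0%VS ->
  square_nonzero mul.
Proof.
move=> full; rewrite -vpick0 => nz; have [s def_z] := full (vpick fullv).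
have [/hasP[p _ p_nz] | /hasPn all0] := boolP (has (fun p => mul p.1 p.2 != 0) s).
  by exists p.1, p.2.
by move: nz; rewrite def_z big_seq big1 ?eqxx // => p /all0; rewrite negbK => /eqP.
Qed.

Lemma vspace_products_eq_fullv (I : {vspace V}) : square_is_full mul ->
  (forall x y, mul x y \in I) -> I = fullv.
Proof.
move=> full prodI; apply/vspaceP => z; rewrite memvf.
by have [s ->] := full z; apply: memv_suml.
Qed.

Lemma natural_basis2C e1 e2 : natural_basis2 mul e1 e2 -> natural_basis2 mul e2 e1.
Proof.
case=> basis_e [e12 e21]; split; last by [].
by rewrite (perm_basis _ (permEl (perm_catC [:: e2] [:: e1]))).
Qed.

Section NaturalBasis.
Variables e1 e2 : V.
Hypothesis e_natural : natural_basis2 mul e1 e2.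

Lemma mul_naturalE a b c d :
  mul (a *: e1 + b *: e2) (c *: e1 + d *: e2) =
  (a * c) *: mul e1 e1 + (b * d) *: mul e2 e2.
Proof.
have [_ [e12 e21]] := e_natural.
rewrite !(bmulDl, bmulDr, bmulZl, bmulZr) e12 e21 !scaler0 addr0 add0r.
by rewrite !scalerA.
Qed.

Lemma mul_natural_e1 a b : mul (a *: e1 + b *: e2) e1 = a *: mul e1 e1.
Proof. by have [_ [_ e21]] := e_natural; rewrite bmulDl !bmulZl e21 scaler0 addr0. Qed.

Lemma mul_natural_e2 a b : mul (a *: e1 + b *: e2) e2 = b *: mul e2 e2.
Proof. by have [_ [e12 _]] := e_natural; rewrite bmulDl !bmulZl e12 scaler0 add0r. Qed.

Lemma products_in_of_squares (I : {vspace V}) :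
  mul e1 e1 \in I -> mul e2 e2 \in I -> forall x y, mul x y \in I.
Proof.
have [basis_e _] := e_natural; move=> e11I e22I x y.
have [a [b ->]] := basis2_coord basis_e x; have [c [d ->]] := basis2_coord basis_e y.
by rewrite mul_naturalE memvD ?memvZ.
Qed.

Lemma ideal_square_of_coord (I : {vspace V}) a b : is_ideal mul I ->
  a *: e1 + b *: e2 \in I -> a != 0 -> mul e1 e1 \in I.
Proof.
move=> idealI uI a_nz; have := (idealI _ e1 uI).1.
by rewrite mul_natural_e1 rpredZeq (negPf a_nz).
Qed.

Lemma ideal_square_cross (I : {vspace V}) w11 w21 : is_ideal mul I ->
  mul e1 e1 = w11 *: e1 + w21 *: e2 -> w21 != 0 ->
  mul e1 e1 \in I -> mul e2 e2 \in I.
Proof.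
move=> idealI def_e11 w21_nz e11I; have := (idealI _ e2 e11I).1.
by rewrite def_e11 mul_natural_e2 rpredZeq (negPf w21_nz).
Qed.

Lemma vline_ideal_natural : mul e1 e1 \in <[e1]>%VS -> is_ideal mul <[e1]>%VS.
Proof.
have [basis_e [e12 e21]] := e_natural; move=> e11_line x y /vlineP[c ->].
have [a [b ->]] := basis2_coord basis_e y.
rewrite !(bmulDl, bmulDr, bmulZl, bmulZr) e12 e21 !scaler0 ?addr0.
by split; rewrite !memvZ.
Qed.

End NaturalBasis.

Lemma ideal_natural_squares (I : {vspace V}) e1 e2 w11 w21 w12 w22 :
  natural_basis2 mul e1 e2 ->
  mul e1 e1 = w11 *: e1 + w21 *: e2 -> mul e2 e2 = w12 *: e1 + w22 *: e2 ->
  w12 != 0 -> w21 != 0 -> is_ideal mul I -> I != 0%VS ->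
  mul e1 e1 \in I /\ mul e2 e2 \in I.
Proof.
move=> e_nat def_e11 def_e22 w12_nz w21_nz idealI; rewrite -vpick0 => u_nz.
have e_nat' := natural_basis2C e_nat.
have [a [b def_u]] := basis2_coord e_nat.1 (vpick I).
have uI : a *: e1 + b *: e2 \in I by rewrite -def_u memv_pick.
have [a0 | a_nz] := eqVneq a 0.
  have b_nz : b != 0 by apply: contraNneq u_nz => b0; rewrite def_u a0 b0 !scale0r addr0.
  rewrite addrC in uI; rewrite addrC in def_e22.
  have e22I := ideal_square_of_coord e_nat' idealI uI b_nz.
  by split=> //; exact: (ideal_square_cross e_nat' idealI def_e22 w12_nz e22I).
have e11I := ideal_square_of_coord e_nat idealI uI a_nz.
by split=> //; exact: (ideal_square_cross e_nat idealI def_e11 w21_nz e11I).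
Qed.

Lemma simple_of_natural_coef (e1 e2 : V) w11 w21 w12 w22 :
  natural_basis2 mul e1 e2 ->
  mul e1 e1 = w11 *: e1 + w21 *: e2 -> mul e2 e2 = w12 *: e1 + w22 *: e2 ->
  w12 != 0 -> w21 != 0 -> square_is_full mul -> simple_algebra mul.
Proof.
move=> e_nat def_e11 def_e22 w12_nz w21_nz full; split.
  by apply: square_nonzero_of_full full _; rewrite -dimv_eq0 (dim_basis2 e_nat.1).
move=> I idealI; have [-> | I_nz] := eqVneq I 0%VS; [by left | right].
have [e11I e22I] := ideal_natural_squares e_nat def_e11 def_e22 w12_nz w21_nz idealI I_nz.
exact/vspace_products_eq_fullv/(products_in_of_squares e_nat).
Qed.

Lemma simple_natural_coef_neq0 (e1 e2 : V) w11 w21 :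
  simple_algebra mul -> natural_basis2 mul e1 e2 ->
  mul e1 e1 = w11 *: e1 + w21 *: e2 -> w21 != 0.
Proof.
move=> [_ simple] e_nat def_e11; apply/eqP => w21_0.
have e11_line : mul e1 e1 \in <[e1]>%VS.
  by rewrite def_e11 w21_0 scale0r addr0 memvZ ?memv_line.
case: (simple _ (vline_ideal_natural e_nat e11_line)) => [/eqP | /eqP].
  by rewrite -dimv_eq0 dim_vline (basis_not0 e_nat.1) ?mem_head.
by apply/negP/vline_neq_fullv; rewrite (dim_basis2 e_nat.1).
Qed.

End Bilinear.

Theorem proposition2p3 (K : fieldType) (V : vectType K) (mul : V -> V -> V) :
  evolution_algebra2 mul -> \dim (fullv : {vspace V}) = 2%N ->
  ((square_is_full mul /\
    (forall (e1 e2 : V) (w11 w21 w12 w22 : K),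
       natural_basis2 mul e1 e2 ->
       mul e1 e1 = w11 *: e1 + w21 *: e2 ->
       mul e2 e2 = w12 *: e1 + w22 *: e2 ->
       w12 != 0 /\ w21 != 0)) ->
   simple_algebra mul)
  /\
  (simple_algebra mul ->
   forall (e1 e2 : V) (w11 w21 w12 w22 : K),
     natural_basis2 mul e1 e2 ->
     mul e1 e1 = w11 *: e1 + w21 *: e2 ->
     mul e2 e2 = w12 *: e1 + w22 *: e2 ->
     w12 != 0 /\ w21 != 0).
Proof.
move=> [mul_bil [e1 [e2 e_nat]]] _; split.
  move=> [full coef_nz].
  have [w11 [w21 def_e11]] := basis2_coord e_nat.1 (mul e1 e1).
  have [w12 [w22 def_e22]] := basis2_coord e_nat.1 (mul e2 e2).
  have [w12_nz w21_nz] := coef_nz _ _ _ _ _ _ e_nat def_e11 def_e22.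
  exact: simple_of_natural_coef def_e11 def_e22 w12_nz w21_nz full.
move=> simple f1 f2 w11 w21 w12 w22 f_nat def_f11 def_f22; split.
  apply: (simple_natural_coef_neq0 mul_bil simple (natural_basis2C f_nat)).
  by rewrite def_f22 addrC.
exact: (simple_natural_coef_neq0 mul_bil simple f_nat def_f11).
Qed.
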